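(* Let $(\Omega,\mathcal{S},\mu)$ and $(\Omega_i,\mathcal{S}_i,\mu_i)$, $i=1,\dots,k$, be measure spaces and $\phi_i\colon\Omega\to\Omega_i$ measurable maps such that the pushforward of $\mu$ by $\phi_i$ is absolutely continuous with respect to $\mu_i$. Let $c_i>0$, $\theta_i>0$ with $\sum_i\theta_i=1$, $0<p\le1$, and define $p_i$ by $c_i\left(1-\frac1p\right)=\theta_i\left(1-\frac1{p_i}\right)$. If there is a finite constant $\mathcal{C}$ such that $$\int_\Omega\prod_{i=1}^kf_i(\phi_i(x))^{c_i}\,d\mu(x)\le\mathcal{C}\prod_{i=1}^k\left(\int_{\Omega_i}f_i\,d\mu_i\right)^{c_i}$$ for all non-negative measurable $f_i$ on $\Omega_i$, then $$\|f\|_{L^p(d\mu)}\le\mathcal{C}^{\frac1p-1}\prod_{i=1}^k\|(\phi_i)_*f\|_{L^{p_i}(d\mu_i)}^{\theta_i}$$ for all non-negative measurable $f$ on $\Omega$.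
   Context: For non-negative measurable $f$ on $\Omega$, the pushforward $(\phi_i)_*f\colon\Omega_i\to[0,\infty]$ is defined by $\int_{\Omega_i}(\phi_i)_*f\,g\,d\mu_i=\int_\Omega f\,(g\circ\phi_i)\,d\mu$ for all non-negative measurable $g$ on $\Omega_i$. *)

From HB Require Import structures.
From mathcomp Require Import all_boot all_order all_algebra.
From mathcomp Require Import all_classical all_reals all_analysis measurable_realfun.
Set Implicit Arguments. Unset Strict Implicit. Unset Printing Implicit Defensive.
Import Order.TTheory GRing.Theory Num.Theory.
Local Open Scope classical_set_scope.
Local Open Scope ring_scope.
Local Open Scope ereal_scope.

Definition nonneg_mfun d (T : measurableType d) (R : realType) (f : T -> \bar R) :=
  measurable_fun [set: T] f /\ (forall x, 0 <= f x).

(* F is the pushforward (phi)_* f of f : Omega -> [0,oo] along phi, in the sense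
   int_{Omega_i} F g dmu_i = int_Omega f (g o phi) dmu for all non-negative
   measurable g on Omega_i *)
Definition is_pushforward d d' (T : measurableType d) (U : measurableType d')
  (R : realType) (mu : {measure set T -> \bar R}) (nu : {measure set U -> \bar R})
  (phi : T -> U) (f : T -> \bar R) (F : U -> \bar R) :=
  nonneg_mfun F /\
  forall g : U -> \bar R, nonneg_mfun g ->
    \int[nu]_y (F y * g y) = \int[mu]_x (f x * g (phi x)).

Definition Lpnorm d (T : measurableType d) (R : realType)
  (mu : {measure set T -> \bar R}) (p : R) (f : T -> \bar R) : \bar R :=
  (\int[mu]_x (f x `^ p)) `^ (p^-1).

(* For p < 1, weighted AM-GM with weights p theta_i and 1 - p gives, pointwise and
   for positive scalars lam_i, nu_i with prod_i lam_i^(p theta_i) nu_i^((1-p) c_i) = 1,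
     f^p <= p sum_i theta_i f lam_i (F_i o phi_i)^(p_i - 1)
            + (1 - p) prod_i (nu_i (F_i o phi_i)^p_i)^c_i;
   the relation between c_i, theta_i, p and p_i is exactly what makes the powers of
   F_i o phi_i cancel in the geometric mean. Integrating, the defining property of the
   pushforward turns the i-th integral of the sum into lam_i int F_i^p_i, and the
   hypothesis bounds the integral of the product by C prod_i (nu_i int F_i^p_i)^c_i.
   Choosing the scalars so that both terms equal K := C^(1-p) prod_i (int F_i^p_i)^(p theta_i / p_i)
   yields int f^p <= K, which is the claim raised to the power p. The cases p = 1,
   C = 0 and int F_i^p_i in {0, +oo} are degenerate. *)

From HB Require Import structures.
From mathcomp Require Import all_boot all_order all_algebra.
From mathcomp Require Import all_classical all_reals all_analysis measurable_realfun.
From mathcomp Require Import ring lra.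
Import Order.TTheory GRing.Theory Num.Theory.

Local Open Scope classical_set_scope.
Local Open Scope ring_scope.

Section weighted_means.
Context {R : realType}.

Lemma ln_le_subr1 (x : R) : 0 < x -> ln x <= x - 1.
Proof. by move=> x0; have := expR_ge1Dx (ln x); rewrite lnK ?posrE //; lra. Qed.

Lemma ln_prod {I : finType} (x : I -> R) : (forall i, 0 < x i) ->
  ln (\prod_i x i) = \sum_i ln (x i).
Proof.
move=> x0; rewrite (eq_bigr (fun i => expR (ln (x i)))); last first.
  by move=> i _; rewrite lnK ?posrE.
by rewrite -expR_sum expRK.
Qed.

Lemma gt0_powRE (x r : R) : 0 < x -> x `^ r = expR (r * ln x).
Proof. by move=> x0; rewrite /powR gt_eqF. Qed.

Lemma wsum_gt0 {I : finType} (w z : I -> R) :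
  (forall i, 0 <= w i) -> \sum_i w i = 1 -> (forall i, 0 < z i) ->
  0 < \sum_i w i * z i.
Proof.
move=> w0 w1 z0; have wz0 i : 0 <= w i * z i by rewrite mulr_ge0 // ltW.
rewrite lt_def sumr_ge0 ?andbT //; apply/eqP => /psumr_eq0P wz_eq0.
move/eqP: w1; apply/negP; rewrite big1 1?eq_sym ?oner_eq0 // => i _.
have /eqP := wz_eq0 (fun i _ => wz0 i) i isT.
by rewrite mulf_eq0 (gt_eqF (z0 i)) orbF => /eqP.
Qed.

Lemma concave_ln_sum {I : finType} (w z : I -> R) :
  (forall i, 0 <= w i) -> \sum_i w i = 1 -> (forall i, 0 < z i) ->
  \sum_i w i * ln (z i) <= ln (\sum_i w i * z i).
Proof.
move=> w0 w1 z0; set m := \sum_i w i * z i.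
have m0 : 0 < m := wsum_gt0 _ _ w0 w1 z0.
have lhsE : \sum_i w i * ln (z i / m) = \sum_i w i * ln (z i) - ln m.
  rewrite (eq_bigr (fun i => w i * ln (z i) - w i * ln m)); last first.
    by move=> i _; rewrite ln_div ?posrE // mulrBr.
  by rewrite sumrB -mulr_suml w1 mul1r.
have rhsE : \sum_i w i * (z i / m - 1) = 0.
  rewrite (eq_bigr (fun i => w i * z i / m - w i)); last first.
    by move=> i _; rewrite mulrBr mulr1 mulrA.
  by rewrite sumrB -mulr_suml w1 mulfV ?gt_eqF // subrr.
rewrite -subr_le0 -lhsE -[X in _ <= X]rhsE.
by apply: ler_sum => i _; rewrite ler_wpM2l // ln_le_subr1 // divr_gt0.
Qed.

Lemma concave_ln2 (t x y : R) : 0 <= t <= 1 -> 0 < x -> 0 < y ->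
  t * ln x + (1 - t) * ln y <= ln (t * x + (1 - t) * y).
Proof.
move=> /andP[t0 t1] x0 y0.
have := @concave_ln_sum bool (fun b => if b then t else 1 - t) (fun b => if b then x else y).
rewrite !big_bool; apply; first by case; rewrite ?subr_ge0.
  by rewrite /= addrC subrK.
by case.
Qed.

Lemma powR_le_young (I : finType) (p : R) (theta c q lam nu u : I -> R) (a : R) :
  0 < p <= 1 -> (forall i, 0 <= theta i) -> \sum_i theta i = 1 ->
  (forall i, p * theta i * (q i - 1) + (1 - p) * c i * q i = 0) ->
  \sum_i (p * theta i * ln (lam i) + (1 - p) * c i * ln (nu i)) = 0 ->
  (forall i, 0 < lam i) -> (forall i, 0 < nu i) -> (forall i, 0 < u i) -> 0 < a ->
  a `^ p <= p * \sum_i theta i * (a * (lam i * u i `^ (q i - 1)))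
            + (1 - p) * \prod_i (nu i * u i `^ q i) `^ c i.
Proof.
move=> /andP[p0 p1] th0 th1 hq hbal lam0 nu0 u0 a0.
set z := fun i => a * (lam i * u i `^ (q i - 1)).
set y := \prod_i _.
have z0 i : 0 < z i by rewrite mulr_gt0 // mulr_gt0 // powR_gt0.
have y0 : 0 < y by rewrite prodr_gt0 // => i _; rewrite powR_gt0 // mulr_gt0 // powR_gt0.
have S0 : 0 < \sum_i theta i * z i := wsum_gt0 _ _ th0 th1 z0.
have geom : p * \sum_i theta i * ln (z i) + (1 - p) * ln y = ln (a `^ p).
  rewrite ln_prod => [|i]; last by rewrite powR_gt0 // mulr_gt0 // powR_gt0.
  rewrite mulr_sumr mulr_sumr -big_split /= ln_powR.
  rewrite (eq_bigr (fun i => p * ln a * theta i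
      + (p * theta i * ln (lam i) + (1 - p) * c i * ln (nu i))
      + (p * theta i * (q i - 1) + (1 - p) * c i * q i) * ln (u i))); last first.
    move=> i _; rewrite /z.
    rewrite ln_powR; do 3 rewrite lnM ?posrE ?mulr_gt0 ?powR_gt0 //.
    by rewrite !ln_powR; ring.
  rewrite big_split big_split /= hbal addr0.
  under [X in _ + X]eq_bigr do rewrite hq mul0r.
  by rewrite big1_eq addr0 -mulr_sumr th1 mulr1.
rewrite -ler_ln ?posrE ?powR_gt0 //; last first.
  have : 0 < p * \sum_i theta i * z i by rewrite mulr_gt0.
  have : 0 <= (1 - p) * y by rewrite mulr_ge0 ?subr_ge0 // ltW.
  rewrite /z; lra.
apply: le_trans (concave_ln2 p _ _ _ S0 y0); last by rewrite p1 ltW.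
by rewrite -geom lerD2r ler_wpM2l ?(ltW p0) // concave_ln_sum.
Qed.

Lemma dual_denom_gt0 (p c theta : R) : 0 < p <= 1 -> 0 < c -> 0 < theta ->
  0 < p * theta + (1 - p) * c.
Proof.
move=> /andP[p0 p1] c0 th0.
by rewrite ltr_wpDr ?mulr_gt0 // mulr_ge0 ?subr_ge0 // ltW.
Qed.

Lemma dual_exponentE (p c theta q : R) :
  0 < p <= 1 -> 0 < c -> 0 < theta -> c * (1 - p^-1) = theta * (1 - q^-1) ->
  q = p * theta / (p * theta + (1 - p) * c).
Proof.
move=> /andP[p0 p1] c0 th0 hq.
(* [q = 0] is ruled out by the junk value [0^-1 = 0], which would force [theta <= 0]. *)
have q0 : q != 0.
  apply/eqP => q_eq0; move/eqP: hq; rewrite q_eq0 invr0 subr0 mulr1 lt_eqF //.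
  by rewrite (le_lt_trans _ th0) // mulr_ge0_le0 ?(ltW c0) // subr_le0 invf_ge1.
have D0 : p * theta + (1 - p) * c != 0 by rewrite gt_eqF ?dual_denom_gt0 ?p0.
apply: (mulIf D0); rewrite mulfVK //; apply/eqP; rewrite -subr_eq0; apply/eqP.
transitivity (p * q * (theta * (1 - q^-1) - c * (1 - p^-1))).
  by field; rewrite q0 gt_eqF.
by rewrite hq subrr mulr0.
Qed.

Lemma dual_exponent_gt0 (p c theta : R) : 0 < p <= 1 -> 0 < c -> 0 < theta ->
  0 < p * theta / (p * theta + (1 - p) * c).
Proof.
move=> p_itv c0 th0; have /andP[p0 _] := p_itv.
by rewrite divr_gt0 ?mulr_gt0 ?dual_denom_gt0.
Qed.

End weighted_means.

Section extended_reals.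
Context {R : realType}.
Local Open Scope ereal_scope.

Lemma sume_eqy {I : finType} (f : I -> \bar R) (j : I) :
  (forall i, 0 <= f i) -> f j = +oo -> \sum_i f i = +oo.
Proof.
move=> f0 fj; rewrite (bigD1 j) //= fj addye //.
by rewrite gt_eqF // (@lt_le_trans _ _ 0) // sume_ge0.
Qed.

Lemma prode_gt0 (I : Type) (s : seq I) (P : pred I) (f : I -> \bar R) :
  (forall i, P i -> 0 < f i) -> 0 < \prod_(i <- s | P i) f i.
Proof. by move=> f0; elim/big_ind: _ => [|x y|i /f0]; [exact: lte01 | exact: mule_gt0 |]. Qed.

Lemma prode_eqy {I : finType} (f : I -> \bar R) (j : I) :
  (forall i, 0 < f i) -> f j = +oo -> \prod_i f i = +oo.
Proof. by move=> f0 fj; rewrite (bigD1 j) //= fj gt0_mulye // prode_gt0. Qed.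

Lemma poweR_sum {I : finType} (w : I -> R) (x : \bar R) :
  (forall i, 0 < w i)%R -> x `^ (\sum_i w i) = \prod_i x `^ w i.
Proof.
move=> w0; pose K s y := (0 <= s)%R /\ x `^ s = y.
suff [] : K (\sum_i w i)%R (\prod_i x `^ w i) by [].
apply: big_rec2 => [|i s y _ [s0 <-]]; first by split; rewrite ?poweRe0.
split; first by rewrite addr_ge0 // ltW.
by rewrite poweRD // add_neq0_poweRD_def // gt_eqF // ltr_wpDr.
Qed.

(* The value +oo at 0 keeps [v * dual_pow lam q v <= lam v^q] (as 0 * +oo = 0) and makes
   [poweR_le_young] trivial where a > 0 = u i. *)
Definition dual_pow (lam q : R) (v : \bar R) : \bar R :=
  if v == 0 then +oo else lam%:E * v `^ (q - 1).

Lemma dual_pow_ge0 (lam q : R) (v : \bar R) : (0 <= lam)%R -> 0 <= dual_pow lam q v.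
Proof. by move=> lam0; rewrite /dual_pow; case: ifP => // _; rewrite mule_ge0 // poweR_ge0. Qed.

Lemma measurable_dual_pow (lam q : R) : measurable_fun [set: \bar R] (dual_pow lam q).
Proof.
apply: measurable_fun_ifT; last 2 first.
- exact: measurable_cst.
- by apply: emeasurable_funM; [exact: measurable_cst | exact: measurable_poweR].
by apply: measurable_fun_eqe; [exact: measurable_id | exact: measurable_cst].
Qed.

Lemma mule_dual_pow_le (lam q : R) (v : \bar R) : (0 < lam)%R -> (0 < q)%R -> 0 <= v ->
  v * dual_pow lam q v <= lam%:E * v `^ q.
Proof.
move=> lam0 q0; case: v => [v| |] // v0.
  have [->|v_gt0] := eqVneq v 0%R; first by rewrite mul0e mule_ge0 ?poweR_ge0 ?lee_fin ?ltW.
  by rewrite /dual_pow eqe (negbTE v_gt0) -!EFinM mulrCA mulr_powRB1.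
by rewrite poweRyr ?gt_eqF // gt0_muley ?lte_fin // leey.
Qed.

Lemma poweR_le_young_EFin (I : finType) (p : R) (theta c q lam nu v : I -> R) (a : R) :
  (0 < p <= 1)%R -> (forall i, 0 <= theta i)%R -> (\sum_i theta i = 1)%R ->
  (forall i, p * theta i * (q i - 1) + (1 - p) * c i * q i = 0)%R ->
  (\sum_i (p * theta i * ln (lam i) + (1 - p) * c i * ln (nu i)) = 0)%R ->
  (forall i, 0 < lam i)%R -> (forall i, 0 < nu i)%R -> (forall i, 0 < v i)%R -> (0 < a)%R ->
  a%:E `^ p <= p%:E * \sum_i (theta i)%:E * (a%:E * dual_pow (lam i) (q i) (v i)%:E)
               + (1 - p)%:E * \prod_i ((nu i)%:E * (v i)%:E `^ q i) `^ c i.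
Proof.
move=> p_itv th0 th1 hq hbal lam0 nu0 v0 a0.
rewrite (eq_bigr (fun i => (theta i * (a * (lam i * v i `^ (q i - 1))))%:E)) => [|i _].
  rewrite [\prod_i _](eq_bigr (fun i => ((nu i * v i `^ q i) `^ c i)%:E)) //.
  rewrite sumEFin prodEFin -!EFinM -EFinD poweR_EFin lee_fin.
  exact: powR_le_young.
by rewrite /dual_pow eqe gt_eqF.
Qed.

Lemma poweR_le_young (I : finType) (p : R) (theta c q lam nu : I -> R)
    (a : \bar R) (u : I -> \bar R) :
  (0 < p < 1)%R -> (forall i, 0 < theta i)%R -> (\sum_i theta i = 1)%R ->
  (forall i, 0 < c i)%R -> (forall i, 0 < q i)%R ->
  (forall i, p * theta i * (q i - 1) + (1 - p) * c i * q i = 0)%R ->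
  (\sum_i (p * theta i * ln (lam i) + (1 - p) * c i * ln (nu i)) = 0)%R ->
  (forall i, 0 < lam i)%R -> (forall i, 0 < nu i)%R ->
  0 <= a -> (forall i, 0 <= u i) ->
  a `^ p <= p%:E * \sum_i (theta i)%:E * (a * dual_pow (lam i) (q i) (u i))
            + (1 - p)%:E * \prod_i ((nu i)%:E * u i `^ q i) `^ c i.
Proof.
move=> /andP[p0 p1] th0 th1 c0 q0 hq hbal lam0 nu0 a0 u0.
have term0 i : 0 <= (theta i)%:E * (a * dual_pow (lam i) (q i) (u i)).
  by rewrite !mule_ge0 ?dual_pow_ge0 ?lee_fin ?(ltW (th0 i)) ?(ltW (lam0 i)).
set S := \sum_i _; set P := \prod_i _.
have pS0 : 0 <= p%:E * S by rewrite mule_ge0 ?sume_ge0 // lee_fin ltW.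
have pP0 : 0 <= (1 - p)%:E * P.
  by rewrite mule_ge0 ?prode_ge0 // => [|i _]; rewrite ?poweR_ge0 // lee_fin subr_ge0 ltW.
have S_oo : S = +oo -> a `^ p <= p%:E * S + (1 - p)%:E * P.
  move=> ->; rewrite gt0_muley ?lte_fin // addye ?leey //.
  by rewrite -ltNye (lt_le_trans ltNy0 pP0).
have P_oo : P = +oo -> a `^ p <= p%:E * S + (1 - p)%:E * P.
  move=> ->; rewrite gt0_muley ?lte_fin ?subr_gt0 // addey ?leey //.
  by rewrite -ltNye (lt_le_trans ltNy0 pS0).
have [->|a_neq0] := eqVneq a 0; first by rewrite poweR0r ?gt_eqF // adde_ge0.
have a_gt0 : 0 < a by rewrite lt0e a_neq0.
have [[j uj0]|/forallNP u_neq0] := pselect (exists j, u j = 0).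
  apply/S_oo/(sume_eqy _ j) => //.
  by rewrite /dual_pow uj0 eqxx !gt0_muley ?lte_fin.
have u_gt0 i : 0 < u i by rewrite lt0e u0 andbT; apply/eqP.
have [[j ujy]|/forallNP u_fin] := pselect (exists j, u j = +oo).
  apply/P_oo/(prode_eqy _ j) => [i|].
    by rewrite poweR_gt0 // mule_gt0 ?poweR_gt0 ?lte_fin.
  by rewrite ujy poweRyr ?gt0_muley ?lte_fin ?poweRyr // gt_eqF.
have [a_oo|a_fin] := eqVneq a +oo.
  have [j _|I0] := pickP (@predT I); last first.
    by move/eqP: th1; rewrite big_pred0 // eq_sym oner_eq0.
  apply/S_oo/(sume_eqy _ j) => //; rewrite a_oo /dual_pow gt_eqF //.
  by rewrite gt0_mulye ?mule_gt0 ?poweR_gt0 ?lte_fin // gt0_muley ?lte_fin.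
have u_fin_num i : u i \is a fin_num by rewrite ge0_fin_numE // ltey; apply/eqP.
have a_fin_num : a \is a fin_num by rewrite ge0_fin_numE // ltey.
rewrite /S /P -(fineK a_fin_num) -(funext (fun i => fineK (u_fin_num i))).
apply: poweR_le_young_EFin => // [|i|i|]; first by rewrite p0 ltW.
- exact: ltW.
- by rewrite -lte_fin fineK.
- by rewrite -lte_fin fineK.
Qed.

End extended_reals.

Section nonneg_integrals.
Context {d} {T : measurableType d} {R : realType}.
Local Open Scope ereal_scope.

Lemma emeasurable_prod (D : set T) (I : Type) (s : seq I) (h : I -> T -> \bar R) :
  (forall i, measurable_fun D (h i)) ->
  measurable_fun D (fun x => \prod_(i <- s) h i x).
Proof.
move=> mh; elim: s => [|i s ih].
  by under eq_fun do rewrite big_nil; exact: measurable_cst.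
by under eq_fun do rewrite big_cons; exact: emeasurable_funM.
Qed.

Variable mu : {measure set T -> \bar R}.

Lemma nonneg_integral_eq0 (g : T -> \bar R) : nonneg_mfun g ->
  \int[mu]_x g x = 0 <-> ae_eq mu [set: T] g (cst 0).
Proof.
move=> [mg g0]; rewrite -ae_eq_integral_abs //.
rewrite (eq_integral g) // => x _; exact: gee0_abs.
Qed.

Lemma integral_poweR_eq0 (g : T -> \bar R) (r : R) : nonneg_mfun g -> r != 0%R ->
  \int[mu]_x g x `^ r = 0 <-> \int[mu]_x g x = 0.
Proof.
move=> [mg g0] r0.
have gr : nonneg_mfun (fun x => g x `^ r).
  by split=> [|x]; [exact: measurableT_comp (measurable_poweR _) mg | exact: poweR_ge0].
rewrite (nonneg_integral_eq0 _ gr) (nonneg_integral_eq0 _ (conj mg g0)).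
have gr0 x : (g x `^ r = 0) <-> (g x = 0).
  by split=> [/eqP|->]; [rewrite poweR_eq0 // r0 andbT => /eqP | rewrite poweR0r].
by split; apply: filterS => x /= h /h /gr0.
Qed.

Lemma Lpnorm1 (g : T -> \bar R) : (forall x, 0 <= g x) -> Lpnorm mu 1 g = \int[mu]_x g x.
Proof.
move=> g0; rewrite /Lpnorm invr1 poweRe1 ?integral_ge0 //.
  by apply: eq_integral => x _; rewrite poweRe1.
by move=> x _; rewrite poweRe1.
Qed.

End nonneg_integrals.

Lemma is_pushforward_integral {d d'} {T : measurableType d} {U : measurableType d'}
    {R : realType} {mu : {measure set T -> \bar R}} {nu : {measure set U -> \bar R}}
    {phi : T -> U} {f : T -> \bar R} {F : U -> \bar R} :
  is_pushforward mu nu phi f F -> (\int[nu]_y F y = \int[mu]_x f x)%E.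
Proof.
move=> [_ push]; have := push (cst 1%E) (conj (measurable_cst _) (fun=> lee01)).
by under eq_integral do rewrite mule1; under [in X in _ = X -> _]eq_integral do rewrite mule1.
Qed.

Section pushforward_duality.
Local Open Scope ereal_scope.
Context {R : realType} {d : measure_display} {Omega : measurableType d}
  {mu : {measure set Omega -> \bar R}} {k : nat}
  {di : 'I_k -> measure_display} {Omegai : forall i, measurableType (di i)}
  {mui : forall i, {measure set Omegai i -> \bar R}}
  {phi : forall i, Omega -> Omegai i} {c : 'I_k -> R} {C : R}.
Hypothesis mphi : forall i, measurable_fun [set: Omega] (phi i).
Hypothesis BL : forall g : forall i, Omegai i -> \bar R, (forall i, nonneg_mfun (g i)) ->
  \int[mu]_x (\prod_(i < k) (g i (phi i x)) `^ (c i))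
    <= C%:E * \prod_(i < k) (\int[mui i]_y g i y) `^ (c i).

Lemma BL_measure_setT_eq0 : C = 0%R -> mu [set: Omega] = 0.
Proof.
move=> C0; apply/eqP; rewrite eq_le measure_ge0 andbT.
have := BL (fun i => cst 1) (fun i => conj (measurable_cst _) (fun=> lee01)).
rewrite C0 mul0e (eq_integral (cst 1)) => [|x _]; last first.
  by rewrite big1 // => i _; rewrite poweR1r.
by rewrite integral_cst // mul1e.
Qed.

Context {f : Omega -> \bar R} {F : forall i, Omegai i -> \bar R}.
Hypothesis f_mfun : nonneg_mfun f.
Hypothesis F_push : forall i, is_pushforward mu (mui i) (phi i) f (F i).

Lemma integral_dual_pow_le (i : 'I_k) (lam q : R) : (0 < lam)%R -> (0 < q)%R ->
  \int[mu]_x (f x * dual_pow lam q (F i (phi i x)))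
    <= lam%:E * \int[mui i]_y F i y `^ q.
Proof.
move=> lam0 q0; have [[mF F0] push] := F_push i.
have mG : measurable_fun [set: Omegai i] (dual_pow lam q \o F i).
  exact: measurableT_comp (measurable_dual_pow _ _) mF.
rewrite -(push _ (conj mG (fun y => dual_pow_ge0 _ _ _ (ltW lam0)))).
have mFq : measurable_fun [set: Omegai i] (fun y => F i y `^ q).
  exact: measurableT_comp (measurable_poweR _) mF.
rewrite -ge0_integralZl_EFin //; last 2 first.
- by move=> y _; exact: poweR_ge0.
- exact: ltW.
apply: ge0_le_integral => //.
- by move=> y _; exact: mule_ge0 (F0 y) (dual_pow_ge0 _ _ _ (ltW lam0)).
- exact: emeasurable_funM.
- exact: emeasurable_funM.
- by move=> y _; exact: mule_dual_pow_le.
Qed.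

Context {p : R} {theta q : 'I_k -> R}.
Hypothesis p_itv : (0 < p <= 1)%R.
Hypothesis theta_gt0 : forall i, (0 < theta i)%R.
Hypothesis theta_sum1 : (\sum_i theta i = 1)%R.
Hypothesis c_gt0 : forall i, (0 < c i)%R.
Hypothesis qE : forall i, q i = (p * theta i / (p * theta i + (1 - p) * c i))%R.

Let M i := \int[mui i]_y F i y `^ q i.

Let q_gt0 i : (0 < q i)%R.
Proof. by rewrite qE dual_exponent_gt0. Qed.

Lemma integral_poweR_le_young (lam nu : 'I_k -> R) :
  (p < 1)%R -> (forall i, 0 < lam i)%R -> (forall i, 0 < nu i)%R ->
  (\sum_i (p * theta i * ln (lam i) + (1 - p) * c i * ln (nu i)) = 0)%R ->
  \int[mu]_x f x `^ p
    <= p%:E * \sum_i (theta i)%:E * \int[mu]_x (f x * dual_pow (lam i) (q i) (F i (phi i x)))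
       + (1 - p)%:E * \int[mu]_x \prod_i ((nu i)%:E * F i (phi i x) `^ q i) `^ c i.
Proof.
move=> p_lt1 lam0 nu0 hbal; have [mf f0] := f_mfun; have /andP[p0 _] := p_itv.
have mFphi i : measurable_fun [set: Omega] (F i \o phi i).
  exact: measurableT_comp (F_push i).1.1 (mphi i).
have powers_cancel i : (p * theta i * (q i - 1) + (1 - p) * c i * q i = 0)%R.
  by rewrite qE; field; rewrite gt_eqF ?dual_denom_gt0.
pose G i x := f x * dual_pow (lam i) (q i) (F i (phi i x)).
pose P x := \prod_i ((nu i)%:E * F i (phi i x) `^ q i) `^ c i.
have G0 i x : 0 <= G i x by rewrite mule_ge0 // dual_pow_ge0 // ltW.
have mG i : measurable_fun [set: Omega] (G i).
  by apply: emeasurable_funM => //; exact: measurableT_comp (measurable_dual_pow _ _) (mFphi i).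
have P0 x : 0 <= P x by rewrite prode_ge0 // => i _; rewrite poweR_ge0.
have mP : measurable_fun [set: Omega] P.
  apply: emeasurable_prod => i; apply: measurableT_comp (measurable_poweR _) _.
  apply: emeasurable_funM; first exact: measurable_cst.
  exact: measurableT_comp (measurable_poweR _) (mFphi i).
have mthG i : measurable_fun [set: Omega] (fun x => (theta i)%:E * G i x).
  by apply: emeasurable_funM => //; exact: measurable_cst.
have thG0 i x : 0 <= (theta i)%:E * G i x by rewrite mule_ge0 // lee_fin ltW.
have mS : measurable_fun [set: Omega] (fun x => \sum_i (theta i)%:E * G i x).
  exact: emeasurable_sum.
have mpS : measurable_fun [set: Omega] (fun x => p%:E * \sum_i (theta i)%:E * G i x).
  by apply: emeasurable_funM => //; exact: measurable_cst.
have mpP : measurable_fun [set: Omega] (fun x => (1 - p)%:E * P x).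
  by apply: emeasurable_funM => //; exact: measurable_cst.
have pS0 x : 0 <= p%:E * \sum_i (theta i)%:E * G i x.
  by rewrite mule_ge0 ?sume_ge0 // lee_fin ltW.
have pP0 x : 0 <= (1 - p)%:E * P x by rewrite mule_ge0 // lee_fin subr_ge0 ltW.
apply: (@le_trans _ _ (\int[mu]_x (p%:E * \sum_i (theta i)%:E * G i x + (1 - p)%:E * P x))).
  apply: ge0_le_integral => //.
  - by move=> x _; rewrite poweR_ge0.
  - exact: measurableT_comp (measurable_poweR _) mf.
  - exact: emeasurable_funD.
  move=> x _; apply: poweR_le_young => //; first by rewrite p0.
  by move=> i; exact: (F_push i).1.2.
rewrite ge0_integralD // !ge0_integralZl ?lee_fin ?subr_ge0 ?(ltW p0) ?(ltW p_lt1) //; last first.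
  by move=> x _; rewrite sume_ge0.
rewrite ge0_integral_sum // (eq_bigr (fun i => (theta i)%:E * \int[mu]_x G i x)) // => i _.
by rewrite ge0_integralZl // lee_fin; exact: ltW.
Qed.

Lemma integral_poweR_le_dual (lam nu : 'I_k -> R) :
  (p < 1)%R -> (forall i, 0 < lam i)%R -> (forall i, 0 < nu i)%R ->
  (\sum_i (p * theta i * ln (lam i) + (1 - p) * c i * ln (nu i)) = 0)%R ->
  \int[mu]_x f x `^ p
    <= p%:E * \sum_i (theta i * lam i)%:E * M i
       + (1 - p)%:E * (C%:E * \prod_i ((nu i)%:E * M i) `^ c i).
Proof.
move=> p_lt1 lam0 nu0 hbal; have /andP[p0 _] := p_itv.
apply: le_trans (integral_poweR_le_young _ _ p_lt1 lam0 nu0 hbal) _.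
apply: leeD; apply: lee_wpmul2l; rewrite ?lee_fin ?subr_ge0 ?(ltW p0) ?(ltW p_lt1) //.
  apply: lee_sum => i _; rewrite EFinM -muleA lee_wpmul2l ?lee_fin ?(ltW (theta_gt0 i)) //.
  exact: integral_dual_pow_le.
have mFq i : measurable_fun [set: Omegai i] (fun y => F i y `^ q i).
  exact: measurableT_comp (measurable_poweR _) (F_push i).1.1.
pose H i y := (nu i)%:E * F i y `^ q i.
have H_mfun i : nonneg_mfun (H i).
  split=> [|y]; first by apply: emeasurable_funM => //; exact: measurable_cst.
  by rewrite mule_ge0 ?poweR_ge0 // lee_fin ltW.
suff -> : \prod_i ((nu i)%:E * M i) `^ c i = \prod_i (\int[mui i]_y H i y) `^ c i.
  exact: BL.
apply: eq_bigr => i _; rewrite ge0_integralZl_EFin // ?(ltW (nu0 i)) //.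
by move=> y _; exact: poweR_ge0.
Qed.

Lemma integral_poweR_le_exp (m : 'I_k -> R) :
  (p < 1)%R -> (0 < C)%R -> (forall i, 0 < m i)%R -> (forall i, M i = (m i)%:E) ->
  \int[mu]_x f x `^ p
    <= (expR ((1 - p) * ln C + \sum_i (p * theta i + (1 - p) * c i) * ln (m i)))%:E.
Proof.
move=> p_lt1 C0 m0 mE; set L := (_ + _)%R.
(* Chosen so that both terms of [integral_poweR_le_dual] become [expR L]. *)
pose lam i := expR (L - ln (m i)).
pose nu i := expR (theta i / c i * (L - ln C) - ln (m i)).
have hbal : (\sum_i (p * theta i * ln (lam i) + (1 - p) * c i * ln (nu i)) = 0)%R.
  rewrite (eq_bigr (fun i => theta i * (L - (1 - p) * ln C)
                             - (p * theta i + (1 - p) * c i) * ln (m i)))%R; last first.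
    by move=> i _; rewrite !expRK; field; rewrite gt_eqF.
  by rewrite sumrB -mulr_suml theta_sum1 mul1r /L; ring.
have lamM i : (theta i * lam i)%:E * M i = (theta i * expR L)%:E.
  by rewrite mE -EFinM -mulrA -[X in (expR _ * X)%R]lnK ?posrE // -expRD subrK.
have nuM i : ((nu i)%:E * M i) `^ c i = (expR (theta i * (L - ln C)))%:E.
  rewrite mE -EFinM -[X in (expR _ * X)%R]lnK ?posrE // -expRD subrK.
  rewrite poweR_EFin gt0_powRE ?expR_gt0 // expRK.
  by congr (expR _)%:E; field; rewrite gt_eqF.
apply: le_trans (integral_poweR_le_dual lam nu p_lt1 (fun=> expR_gt0 _) (fun=> expR_gt0 _) hbal) _.
rewrite (eq_bigr _ (fun i _ => lamM i)) (eq_bigr _ (fun i _ => nuM i)).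
rewrite sumEFin prodEFin -!EFinM -EFinD lee_fin -expR_sum -mulr_suml theta_sum1.
rewrite mul1r -mulr_suml theta_sum1 mul1r [expR (L - _)]expRD expRN lnK ?posrE //.
by rewrite [(C * _)%R]mulrC divfK ?gt_eqF // -mulrDl addrC subrK mul1r.
Qed.

Lemma Lpnorm_le_nondegenerate :
  (p < 1)%R -> (0 < C)%R -> (forall i, 0 < M i < +oo) ->
  Lpnorm mu p f <= C%:E `^ (p^-1 - 1) * \prod_i Lpnorm (mui i) (q i) (F i) `^ theta i.
Proof.
move=> p_lt1 C0 M_fin; have /andP[p0 _] := p_itv.
pose m i := fine (M i).
have mE i : M i = (m i)%:E.
  by have /andP[M0 Moo] := M_fin i; rewrite fineK // ge0_fin_numE // ltW.
have m0 i : (0 < m i)%R by rewrite -lte_fin -mE; case/andP: (M_fin i).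
have := integral_poweR_le_exp m p_lt1 C0 m0 mE; set L := (_ + _)%R => bound.
rewrite /Lpnorm (le_trans (gt0_ler_poweR _ _ _ bound)) //.
- by apply/ltW; rewrite invr_gt0.
- by rewrite in_itv /= leey andbT integral_ge0 // => x _; rewrite poweR_ge0.
- by rewrite in_itv /= leey andbT lee_fin expR_ge0.
rewrite [\prod_i _](eq_bigr (fun i => (expR (theta i * ((q i)^-1 * ln (m i))))%:E)).
  rewrite prodEFin !poweR_EFin !gt0_powRE ?expR_gt0 // expRK -expR_sum -EFinM -expRD.
  rewrite lee_fin le_eqVlt; apply/orP; left; apply/eqP; congr (expR _).
  rewrite /L mulrDr mulr_sumr; congr (_ + _)%R; first by field; rewrite gt_eqF.
  by apply: eq_bigr => i _; rewrite qE; field; rewrite !gt_eqF ?dual_denom_gt0.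
by move=> i _; rewrite -/(M i) mE !poweR_EFin gt0_powRE ?powR_gt0 // gt0_powRE // expRK.
Qed.

Lemma Lpnorm_le_p1 : p = 1%R ->
  Lpnorm mu p f <= C%:E `^ (p^-1 - 1) * \prod_i Lpnorm (mui i) (q i) (F i) `^ theta i.
Proof.
move=> p1; rewrite [in X in _ <= X]p1 invr1 subrr poweRe0 mul1e.
have q1 i : q i = 1%R by rewrite qE p1 subrr mul0r addr0 mul1r divff // gt_eqF.
rewrite (eq_bigr (fun i => (\int[mu]_x f x) `^ theta i)) => [|i _]; last first.
  rewrite q1 Lpnorm1; last exact: (F_push i).1.2.
  by rewrite (is_pushforward_integral (F_push i)).
have [_ f0] := f_mfun.
by rewrite -poweR_sum // theta_sum1 poweRe1 ?p1 ?Lpnorm1 // integral_ge0.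
Qed.

Lemma Lpnorm_le_degenerate : C = 0%R \/ (exists j, M j = 0) ->
  Lpnorm mu p f <= C%:E `^ (p^-1 - 1) * \prod_i Lpnorm (mui i) (q i) (F i) `^ theta i.
Proof.
move=> null; have /andP[p0 _] := p_itv.
suff int0 : \int[mu]_x f x `^ p = 0.
  rewrite /Lpnorm int0 poweR0r ?invr_neq0 ?gt_eqF // mule_ge0 ?poweR_ge0 //.
  by rewrite prode_ge0 // => i _; exact: poweR_ge0.
apply/integral_poweR_eq0 => //; first by rewrite gt_eqF.
case: null => [C0|[j Mj0]].
  apply/nonneg_integral_eq0 => //.
  exact: ae_eq0 measurableT (BL_measure_setT_eq0 C0).
rewrite -(is_pushforward_integral (F_push j)).
exact: (integral_poweR_eq0 (mui j) (F j) (q j) (F_push j).1 (lt0r_neq0 (q_gt0 j))).1 Mj0.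
Qed.

Lemma prod_Lpnorm_eqy (j : 'I_k) : (forall i, M i != 0) -> M j = +oo ->
  \prod_i Lpnorm (mui i) (q i) (F i) `^ theta i = +oo.
Proof.
move=> M_neq0 Mjy; have M_gt0 i : 0 < M i.
  by rewrite lt0e M_neq0 integral_ge0 // => y _; exact: poweR_ge0.
apply: (prode_eqy _ j) => [i|]; first by rewrite /Lpnorm !poweR_gt0 //; exact: M_gt0.
rewrite /Lpnorm -/(M j) Mjy !poweRyr // gt_eqF //.
by rewrite invr_gt0 q_gt0.
Qed.

End pushforward_duality.

Local Open Scope ereal_scope.

Theorem theorem9p1 (R : realType) (d : measure_display) (Omega : measurableType d)
  (mu : {measure set Omega -> \bar R}) (k : nat)
  (di : 'I_k -> measure_display) (Omegai : forall i, measurableType (di i))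
  (mui : forall i, {measure set Omegai i -> \bar R})
  (phi : forall i, Omega -> Omegai i)
  (c theta pi : 'I_k -> R) (p C : R) :
  (forall i, measurable_fun [set: Omega] (phi i)) ->
  (forall i, pushforward mu (phi i) `<< mui i) ->
  (forall i, (0 < c i)%R) ->
  (forall i, (0 < theta i)%R) ->
  (\sum_(i < k) theta i = 1)%R ->
  (0 < p <= 1)%R ->
  (forall i, c i * (1 - p^-1) = theta i * (1 - (pi i)^-1))%R ->
  (0 <= C)%R ->
  (forall f : forall i, Omegai i -> \bar R, (forall i, nonneg_mfun (f i)) ->
     \int[mu]_x (\prod_(i < k) (f i (phi i x)) `^ (c i))
       <= C%:E * \prod_(i < k) (\int[mui i]_y f i y) `^ (c i)) ->
  forall (f : Omega -> \bar R) (F : forall i, Omegai i -> \bar R),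
    nonneg_mfun f ->
    (forall i, is_pushforward mu (mui i) (phi i) f (F i)) ->
    Lpnorm mu p f <= C%:E `^ (p^-1 - 1) * \prod_(i < k) (Lpnorm (mui i) (pi i) (F i)) `^ (theta i).
Proof.
(* Absolute continuity only guarantees that the densities [F i] exist; they are given. *)
move=> mphi _ c0 th0 th1 p_itv hpi C0 BL f F f_mfun F_push.
have qE i := dual_exponentE _ _ _ _ p_itv (c0 i) (th0 i) (hpi i).
have [p_eq1|p_neq1] := eqVneq p 1%R; first exact: Lpnorm_le_p1.
have p_lt1 : (p < 1)%R by rewrite lt_neqAle p_neq1; case/andP: p_itv.
pose M i := \int[mui i]_y F i y `^ pi i.
have [degen|/not_orP[/eqP C_neq0 /forallNP M_neq0]] :=
  pselect (C = 0%R \/ exists j, M j = 0).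
  by apply: Lpnorm_le_degenerate => //; exact: BL.
have C_gt0 : (0 < C)%R by rewrite lt_neqAle eq_sym C_neq0.
have {}M_neq0 i : M i != 0 by apply/eqP.
have [[j Mjy]|/forallNP M_fin] := pselect (exists j, M j = +oo).
  rewrite (prod_Lpnorm_eqy p_itv th0 c0 qE j M_neq0 Mjy) gt0_muley ?leey //.
  by rewrite poweR_EFin lte_fin powR_gt0.
apply: Lpnorm_le_nondegenerate => //; first exact: BL.
move=> i; rewrite lt0e M_neq0 integral_ge0 ?ltey => [|y _]; last exact: poweR_ge0.
by apply/eqP; exact: M_fin.
Qed.
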